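(* The ai-semiring $S_{(4,435)}$ is nonfinitely based.
   Context: An ai-semiring is an algebra $(S,+,\cdot)$ with $(S,+)$ a semilattice, $(S,\cdot)$ a semigroup, and both distributive laws. An algebra is finitely based if some finite set of identities derives all its identities. $S_{(4,435)}$ has carrier $\{1,2,3,4\}$; addition: $x+x=x$, $2+x=x$, $1+x=1$ for all $x$, $3+4=1$; multiplication (row $a$, column $b$ gives $a\cdot b$): row $1$: $1,2,1,1$; row $2$: $2,2,2,2$; row $3$: $1,2,1,3$; row $4$: $1,2,3,4$. *)

From Stdlib Require Import List.

Inductive term : Type :=
| Var : nat -> term
| Add : term -> term -> term
| Mul : term -> term -> term.

Definition identity := (term * term)%type.

Fixpoint subst (s : nat -> term) (t : term) : term :=
  match t with
  | Var n => s n
  | Add a b => Add (subst s a) (subst s b)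
  | Mul a b => Mul (subst s a) (subst s b)
  end.

Inductive derives (Sigma : list identity) : term -> term -> Prop :=
| der_ax : forall u v, In (u, v) Sigma -> derives Sigma u v
| der_refl : forall u, derives Sigma u u
| der_sym : forall u v, derives Sigma u v -> derives Sigma v u
| der_trans : forall u v w,
    derives Sigma u v -> derives Sigma v w -> derives Sigma u w
| der_subst : forall (s : nat -> term) u v,
    derives Sigma u v -> derives Sigma (subst s u) (subst s v)
| der_add : forall u u' v v',
    derives Sigma u u' -> derives Sigma v v' ->
    derives Sigma (Add u v) (Add u' v')
| der_mul : forall u u' v v',
    derives Sigma u u' -> derives Sigma v v' ->
    derives Sigma (Mul u v) (Mul u' v').

Fixpoint eval {A : Type} (add mul : A -> A -> A) (e : nat -> A) (t : term) : A :=
  match t with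
  | Var n => e n
  | Add a b => add (eval add mul e a) (eval add mul e b)
  | Mul a b => mul (eval add mul e a) (eval add mul e b)
  end.

Definition satisfies {A : Type} (add mul : A -> A -> A) (p : identity) : Prop :=
  forall e : nat -> A, eval add mul e (fst p) = eval add mul e (snd p).

Definition finitely_based {A : Type} (add mul : A -> A -> A) : Prop :=
  exists Sigma : list identity,
    (forall p, In p Sigma -> satisfies add mul p) /\
    (forall u v, satisfies add mul (u, v) -> derives Sigma u v).

Inductive S4 : Type := e1 | e2 | e3 | e4.

Definition S4add (x y : S4) : S4 :=
  match x, y with
  | e1, _ => e1
  | _, e1 => e1
  | e2, z => z
  | z, e2 => z
  | e3, e3 => e3
  | e4, e4 => e4
  | e3, e4 => e1
  | e4, e3 => e1
  end.

Definition S4mul (x y : S4) : S4 :=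
  match x, y with
  | e1, e1 => e1 | e1, e2 => e2 | e1, e3 => e1 | e1, e4 => e1
  | e2, _ => e2
  | e3, e1 => e1 | e3, e2 => e2 | e3, e3 => e1 | e3, e4 => e3
  | e4, e1 => e1 | e4, e2 => e2 | e4, e3 => e3 | e4, e4 => e4
  end.

(* Suppose S4 had a finite basis Sigma whose variables are all below B, and let n = 2B + 3.
   Call a term good in a context (a, b) if a w b is an edge of the n-cycle for each of its
   words w.  Goodness is transferred along substitution instances of identities of S4 in
   fewer than n variables: if s(p) is good and p = q holds in S4, colour the variables of p
   along the cycle with a vertex missed by all of them removed (a path, so 2-colourable);
   evaluating at 3 and 4 according to the colour (3·4 = 4·3 = 3, 3·3 = 1) forces each word
   of q to be a word of p or the reverse of a two-letter one.  Hence goodness is preserved by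
   every consequence of Sigma.  But S4 satisfies C = C + x0 x1 ... x(n-1) for the cycle sum
   C = x0 x1 + x1 x2 + ... + x(n-1) x0, because an odd cycle is not 2-colourable, and only
   the left-hand side is good. *)

From Stdlib Require Import List Arith Lia Bool.
Import ListNotations.

Definition word_prod (A B : list (list nat)) : list (list nat) :=
  flat_map (fun a => map (app a) B) A.

Fixpoint words (t : term) : list (list nat) :=
  match t with
  | Var k => [[k]]
  | Add u v => words u ++ words v
  | Mul u v => word_prod (words u) (words v)
  end.

Lemma in_word_prod A B m :
  In m (word_prod A B) <-> exists a b, In a A /\ In b B /\ m = a ++ b.
Proof.
  unfold word_prod; rewrite in_flat_map; split.
  - intros [a [Ha Hm]]; apply in_map_iff in Hm as [b [<- Hb]]; eauto.
  - intros [a [b [Ha [Hb ->]]]]; exists a; split; [|apply in_map]; auto.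
Qed.

Lemma words_exist t : exists m, In m (words t).
Proof.
  induction t as [k | u [m Hm] v _ | u [a Ha] v [b Hb]]; simpl.
  - eauto.
  - exists m; apply in_or_app; auto.
  - exists (a ++ b); apply in_word_prod; eauto.
Qed.

Lemma word_length_pos t m : In m (words t) -> 1 <= length m.
Proof.
  revert m; induction t as [k | u IHu v IHv | u IHu v IHv]; simpl; intros m Hm.
  - destruct Hm as [<- | []]; simpl; lia.
  - apply in_app_or in Hm as [Hm | Hm]; auto.
  - apply in_word_prod in Hm as [a [b [Ha [_ ->]]]].
    rewrite length_app; specialize (IHu a Ha); lia.
Qed.

Section WordExpansion.

Context {A : Type} (add mul : A -> A -> A) (zero one : A).
Hypotheses
  (add_assoc : forall x y z, add x (add y z) = add (add x y) z)
  (mul_assoc : forall x y z, mul x (mul y z) = mul (mul x y) z)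
  (add_0l : forall x, add zero x = x) (add_0r : forall x, add x zero = x)
  (mul_1l : forall x, mul one x = x) (mul_1r : forall x, mul x one = x)
  (mul_0l : forall x, mul zero x = zero) (mul_0r : forall x, mul x zero = zero)
  (mul_addl : forall x y z, mul (add x y) z = add (mul x z) (mul y z))
  (mul_addr : forall x y z, mul x (add y z) = add (mul x y) (mul x z)).

Definition word_value (e : nat -> A) (w : list nat) : A := fold_right mul one (map e w).

Lemma fold_add_app l1 l2 :
  fold_right add zero (l1 ++ l2) = add (fold_right add zero l1) (fold_right add zero l2).
Proof. induction l1 as [|x l1 IH]; simpl; rewrite ?IH; auto. Qed.

Lemma word_value_app e w1 w2 :
  word_value e (w1 ++ w2) = mul (word_value e w1) (word_value e w2).
Proof.
  unfold word_value; rewrite map_app.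
  induction (map e w1) as [|x l IH]; simpl; rewrite ?IH; auto.
Qed.

Lemma eval_words e t :
  eval add mul e t = fold_right add zero (map (word_value e) (words t)).
Proof.
  induction t as [k | u IHu v IHv | u IHu v IHv]; simpl.
  - unfold word_value; simpl; rewrite mul_1r, add_0r; reflexivity.
  - rewrite map_app, fold_add_app, IHu, IHv; reflexivity.
  - rewrite IHu, IHv; unfold word_prod; clear IHu IHv.
    induction (words u) as [|a U IH]; simpl; [auto|].
    rewrite map_app, fold_add_app, <- IH, mul_addl; f_equal.
    clear IH; induction (words v) as [|b V IHV]; simpl; [auto|].
    rewrite word_value_app, <- IHV, mul_addr; reflexivity.
Qed.

End WordExpansion.

Fixpoint subst_words (s : nat -> term) (w : list nat) : list (list nat) :=
  match w with
  | [] => [[]]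
  | y :: w' => word_prod (words (s y)) (subst_words s w')
  end.

Lemma in_subst_words_app s w1 w2 m :
  In m (subst_words s (w1 ++ w2)) <->
  exists m1 m2, In m1 (subst_words s w1) /\ In m2 (subst_words s w2) /\ m = m1 ++ m2.
Proof.
  revert m; induction w1 as [|y w1 IH]; intros m; simpl.
  - split.
    + intros Hm; exists [], m; auto.
    + intros [m1 [m2 [[<- | []] [Hm2 ->]]]]; auto.
  - rewrite in_word_prod; split.
    + intros [a [b [Ha [Hb ->]]]]; apply IH in Hb as [c [d [Hc [Hd ->]]]].
      exists (a ++ c), d; rewrite in_word_prod, <- app_assoc; split; [exists a, c|]; auto.
    + intros [c [d [Hc [Hd ->]]]]; apply in_word_prod in Hc as [a [b [Ha [Hb ->]]]].
      exists a, (b ++ d); rewrite IH, <- app_assoc; split; [|split; [exists b, d|]]; auto.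
Qed.

Lemma in_subst_words_single s y m : In m (subst_words s [y]) <-> In m (words (s y)).
Proof.
  simpl; rewrite in_word_prod; split.
  - intros [a [b [Ha [[<- | []] ->]]]]; rewrite app_nil_r; auto.
  - intros Hm; exists m, []; rewrite app_nil_r; auto using in_eq.
Qed.

Lemma in_subst_words_pair s y z m :
  In m (subst_words s [y; z]) <->
  exists a b, In a (words (s y)) /\ In b (words (s z)) /\ m = a ++ b.
Proof.
  change [y; z] with ([y] ++ [z]); rewrite in_subst_words_app.
  setoid_rewrite in_subst_words_single; reflexivity.
Qed.

Lemma in_words_subst s t m :
  In m (words (subst s t)) <-> exists w, In w (words t) /\ In m (subst_words s w).
Proof.
  revert m; induction t as [k | u IHu v IHv | u IHu v IHv]; intros m; simpl.
  - split.
    + intros Hm; exists [k]; rewrite in_subst_words_single; auto.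
    + intros [w [[<- | []] Hm]]; apply in_subst_words_single; auto.
  - rewrite in_app_iff, IHu, IHv; split.
    + intros [[w [Hw Hm]] | [w [Hw Hm]]]; exists w; rewrite in_app_iff; auto.
    + intros [w [Hw Hm]]; apply in_app_iff in Hw as [Hw | Hw]; eauto.
  - rewrite in_word_prod; split.
    + intros [a [b [Ha [Hb ->]]]]; apply IHu in Ha as [wa [Hwa Ha]];
        apply IHv in Hb as [wb [Hwb Hb]].
      exists (wa ++ wb); rewrite in_word_prod, in_subst_words_app.
      split; [exists wa, wb | exists a, b]; auto.
    + intros [w [Hw Hm]]; apply in_word_prod in Hw as [wa [wb [Hwa [Hwb ->]]]].
      apply in_subst_words_app in Hm as [a [b [Ha [Hb ->]]]].
      exists a, b; rewrite IHu, IHv; split; [|split]; eauto.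
Qed.

Lemma subst_words_exist s w : exists m, In m (subst_words s w).
Proof.
  induction w as [|y w [m Hm]]; simpl; [eauto|].
  destruct (words_exist (s y)) as [a Ha]; exists (a ++ m); apply in_word_prod; eauto.
Qed.

Lemma subst_words_length s w m : In m (subst_words s w) -> length w <= length m.
Proof.
  revert m; induction w as [|y w IH]; simpl; intros m Hm; [lia|].
  apply in_word_prod in Hm as [a [b [Ha [Hb ->]]]].
  apply word_length_pos in Ha; apply IH in Hb; rewrite length_app; lia.
Qed.

Lemma subst_subst s r t : subst r (subst s t) = subst (fun k => subst r (s k)) t.
Proof. induction t; simpl; congruence. Qed.

Lemma subst_Var t : subst Var t = t.
Proof. induction t; simpl; congruence. Qed.

Definition words_in_ctx (P : list nat -> Prop) (a b : list nat) (t : term) : Prop :=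
  forall m, In m (words t) -> P (a ++ m ++ b).

Definition ctx_equiv (P : list nat -> Prop) (u v : term) : Prop :=
  forall a b, words_in_ctx P a b u <-> words_in_ctx P a b v.

Lemma words_in_ctx_add P a b u v :
  words_in_ctx P a b (Add u v) <-> words_in_ctx P a b u /\ words_in_ctx P a b v.
Proof.
  unfold words_in_ctx; simpl; split.
  - intros H; split; intros m Hm; apply H, in_or_app; auto.
  - intros [Hu Hv] m Hm; apply in_app_or in Hm as [Hm | Hm]; auto.
Qed.

Lemma words_in_ctx_mul_l P a b u v :
  words_in_ctx P a b (Mul u v) <->
  forall m, In m (words v) -> words_in_ctx P a (m ++ b) u.
Proof.
  unfold words_in_ctx; simpl; setoid_rewrite in_word_prod; split.
  - intros H m Hm m' Hm'; rewrite (app_assoc m'); apply H; eauto.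
  - intros H m [m1 [m2 [H1 [H2 ->]]]]; rewrite <- (app_assoc m1); auto.
Qed.

Lemma words_in_ctx_mul_r P a b u v :
  words_in_ctx P a b (Mul u v) <->
  forall m, In m (words u) -> words_in_ctx P (a ++ m) b v.
Proof.
  unfold words_in_ctx; simpl; setoid_rewrite in_word_prod; split.
  - intros H m Hm m' Hm'; rewrite <- app_assoc, (app_assoc m); apply H; eauto.
  - intros H m [m1 [m2 [H1 [H2 ->]]]].
    rewrite <- (app_assoc m1), (app_assoc a); apply H; auto.
Qed.

Lemma ctx_equiv_add P u u' v v' :
  ctx_equiv P u u' -> ctx_equiv P v v' -> ctx_equiv P (Add u v) (Add u' v').
Proof. intros Hu Hv a b; rewrite !words_in_ctx_add, (Hu a b), (Hv a b); reflexivity. Qed.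

Lemma ctx_equiv_mul P u u' v v' :
  ctx_equiv P u u' -> ctx_equiv P v v' -> ctx_equiv P (Mul u v) (Mul u' v').
Proof.
  unfold ctx_equiv in *; intros Hu Hv a b.
  transitivity (words_in_ctx P a b (Mul u' v)).
  - rewrite !words_in_ctx_mul_l; setoid_rewrite Hu; reflexivity.
  - rewrite !words_in_ctx_mul_r; setoid_rewrite Hv; reflexivity.
Qed.

Lemma derives_ctx_equiv P Sigma :
  (forall u v, In (u, v) Sigma -> forall s, ctx_equiv P (subst s u) (subst s v)) ->
  forall u v, derives Sigma u v -> forall s, ctx_equiv P (subst s u) (subst s v).
Proof.
  intros HSigma u v D; induction D as [u v Huv | u | u v _ IH | u v w _ IH1 _ IH2
    | r u v _ IH | u u' v v' _ IHu _ IHv | u u' v v' _ IHu _ IHv]; intros s a b.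
  - apply HSigma; auto.
  - reflexivity.
  - symmetry; apply IH.
  - rewrite (IH1 s a b); apply IH2.
  - rewrite !subst_subst; apply IH.
  - apply ctx_equiv_add; auto.
  - apply ctx_equiv_mul; auto.
Qed.

Definition S4_eq_dec (x y : S4) : {x = y} + {x <> y}.
Proof. decide equality. Defined.

Definition S4le (x y : S4) : Prop := S4add x y = y.

Notation sum4 := (fold_right S4add e2).
Notation prod4 := (fold_right S4mul e4).
Notation val4 := (word_value S4mul e4).

Lemma S4_eval_words e t : eval S4add S4mul e t = sum4 (map (val4 e) (words t)).
Proof.
  apply eval_words; intros;
    repeat match goal with x : S4 |- _ => destruct x end; reflexivity.
Qed.

Lemma val4_single e y : val4 e [y] = e y.
Proof. unfold word_value; simpl; destruct (e y); reflexivity. Qed.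

Lemma val4_pair e y z : val4 e [y; z] = S4mul (e y) (e z).
Proof. unfold word_value; simpl; destruct (e y), (e z); reflexivity. Qed.

Lemma S4le_add x y z : S4le (S4add x y) z <-> S4le x z /\ S4le y z.
Proof. unfold S4le; destruct x, y, z; simpl; intuition discriminate. Qed.

Lemma sum4_le l x : S4le (sum4 l) x <-> Forall (fun y => S4le y x) l.
Proof.
  induction l as [|y l IH]; simpl.
  - split; auto; intros _; destruct x; reflexivity.
  - rewrite S4le_add, IH, Forall_cons_iff; reflexivity.
Qed.

Lemma sum4_eq3 l : Forall (fun y => S4le y e3) l -> (sum4 l = e3 <-> In e3 l).
Proof.
  intros H; induction H as [|y l Hy Hl IH]; simpl; [split; [discriminate | tauto]|].
  apply sum4_le in Hl; revert Hy Hl IH; unfold S4le.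
  destruct y, (sum4 l); simpl; intuition discriminate.
Qed.

Lemma sum4_one l : In e1 l -> sum4 l = e1.
Proof.
  induction l as [|y l IH]; simpl; [tauto|].
  intros [-> | H]; [reflexivity | rewrite IH by auto; destruct y; reflexivity].
Qed.

Lemma prod4_zero l : In e2 l -> prod4 l = e2.
Proof.
  induction l as [|y l IH]; simpl; [tauto|].
  intros [-> | H]; [reflexivity | rewrite IH by auto; destruct y; reflexivity].
Qed.

Lemma prod4_e4 l : Forall (eq e4) l -> prod4 l = e4.
Proof. intros H; induction H as [|y l <- _ IH]; simpl; rewrite ?IH; reflexivity. Qed.

Lemma prod4_34 l :
  Forall (fun x => x = e3 \/ x = e4) l ->
  prod4 l = match count_occ S4_eq_dec l e3 with 0 => e4 | 1 => e3 | _ => e1 end.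
Proof.
  intros H; induction H as [|y l Hy _ IH]; simpl; [reflexivity|].
  rewrite IH; destruct Hy as [-> | ->]; simpl;
    destruct (count_occ S4_eq_dec l e3) as [|[|k]]; reflexivity.
Qed.

Lemma prod4_le3_count l :
  Forall (fun x => x = e3 \/ x = e4) l -> S4le (prod4 l) e3 -> count_occ S4_eq_dec l e3 = 1.
Proof.
  intros H; rewrite (prod4_34 l H).
  destruct (count_occ S4_eq_dec l e3) as [|[|k]]; easy.
Qed.

Lemma satisfies_le3_transfer p q e :
  satisfies S4add S4mul (p, q) ->
  (forall w, In w (words p) -> S4le (val4 e w) e3) ->
  forall w, In w (words q) ->
  S4le (val4 e w) e3 /\ (val4 e w = e3 -> exists w', In w' (words p) /\ val4 e w' = e3).
Proof.
  intros Hpq Hp w Hw.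
  assert (Hsum : sum4 (map (val4 e) (words p)) = sum4 (map (val4 e) (words q)))
    by (rewrite <- !S4_eval_words; apply Hpq).
  assert (Hp' : Forall (fun x => S4le x e3) (map (val4 e) (words p))).
  { apply Forall_forall; intros x Hx; apply in_map_iff in Hx as [w' [<- Hw']]; auto. }
  assert (Hq' : Forall (fun x => S4le x e3) (map (val4 e) (words q))).
  { apply sum4_le; rewrite <- Hsum; apply sum4_le; exact Hp'. }
  assert (Hwq : In (val4 e w) (map (val4 e) (words q))) by (apply in_map; exact Hw).
  split; [exact (proj1 (Forall_forall _ _) Hq' _ Hwq)|].
  intros H3; rewrite H3 in Hwq.
  apply (sum4_eq3 _ Hq'), eq_sym in Hwq; rewrite <- Hsum in Hwq.
  apply eq_sym, (sum4_eq3 _ Hp'), in_map_iff in Hwq as [w' [Hw' Hw'p]]; eauto.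
Qed.

Definition cyc_succ (n i : nat) : nat := if S i =? n then 0 else S i.

Definition cycle_adj (n a b : nat) : Prop :=
  a < n /\ b < n /\ (b = cyc_succ n a \/ a = cyc_succ n b).

Definition cycle_edge (n : nat) (m : list nat) : Prop :=
  match m with [a; b] => cycle_adj n a b | _ => False end.

Lemma cycle_edge_length n m : cycle_edge n m -> length m = 2.
Proof. destruct m as [|a [|b [|c m]]]; simpl; tauto. Qed.

Lemma cycle_edge_swap n a b : cycle_edge n [a; b] -> cycle_edge n [b; a].
Proof. unfold cycle_edge, cycle_adj; tauto. Qed.

Lemma cycle_minus_vertex_2colorable n r :
  r < n -> exists c : nat -> bool,
    forall a b, cycle_adj n a b -> a <> r -> b <> r -> c a <> c b.
Proof.
  intros Hr.
  (* [pos a] is the distance from [r] forward to [a] along the cycle. *)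
  set (pos a := if r <? a then a - r else a + n - r).
  exists (fun a => Nat.even (pos a)); intros a b [Ha [Hb Hab]] Hra Hrb.
  assert (Hpos : pos b = S (pos a) \/ pos a = S (pos b)).
  { unfold pos, cyc_succ in *.
    destruct (Nat.eqb_spec (S a) n), (Nat.eqb_spec (S b) n),
      (Nat.ltb_spec r a), (Nat.ltb_spec r b); lia. }
  destruct Hpos as [-> | ->]; rewrite Nat.even_succ, <- Nat.negb_even;
    destruct (Nat.even _); discriminate.
Qed.

Lemma odd_cycle_not_2colorable n (c : nat -> bool) :
  Nat.Odd n -> ~ (forall i, i < n -> c (cyc_succ n i) <> c i).
Proof.
  intros [k Hk] Hc.
  assert (Halt : forall i, i < n -> c i = xorb (c 0) (Nat.odd i)).
  { induction i as [|i IH]; intros Hi; [destruct (c 0); reflexivity|].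
    specialize (Hc i ltac:(lia)); unfold cyc_succ in Hc.
    destruct (Nat.eqb_spec (S i) n); [lia|].
    rewrite IH in Hc by lia; rewrite Nat.odd_succ, <- Nat.negb_odd.
    destruct (c (S i)), (c 0), (Nat.odd i); simpl in *; congruence. }
  specialize (Hc (n - 1) ltac:(lia)); unfold cyc_succ in Hc.
  destruct (Nat.eqb_spec (S (n - 1)) n); [|lia].
  rewrite (Halt (n - 1)) in Hc by lia.
  replace (Nat.odd (n - 1)) with false in Hc.
  - destruct (c 0); auto.
  - rewrite <- Nat.negb_even, (proj2 (Nat.even_spec (n - 1))) by (exists k; lia); reflexivity.
Qed.

Lemma cycle_edge_app_swap n a b :
  1 <= length a -> 1 <= length b -> cycle_edge n (b ++ a) -> cycle_edge n (a ++ b).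
Proof.
  intros La Lb H; pose proof (cycle_edge_length _ _ H) as L; rewrite length_app in L.
  destruct a as [|x [|]], b as [|y [|]]; simpl in *; try lia; apply cycle_edge_swap, H.
Qed.

Lemma exists_not_in_below n (l : list nat) : length l < n -> exists r, r < n /\ ~ In r l.
Proof.
  intros Hl.
  destruct (Exists_dec (fun r => ~ In r l) (seq 0 n)) as [Hex | Hno].
  - intros r; destruct (in_dec Nat.eq_dec r l); [right | left]; tauto.
  - apply Exists_exists in Hex as [r [Hr Hrl]]; apply in_seq in Hr.
    exists r; split; [lia | exact Hrl].
  - assert (Hincl : incl (seq 0 n) l).
    { intros r Hr; destruct (in_dec Nat.eq_dec r l) as [Hrl | Hrl]; [exact Hrl|].
      exfalso; apply Hno, Exists_exists; eauto. }
    apply NoDup_incl_length in Hincl; [|apply seq_NoDup].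
    rewrite length_seq in Hincl; lia.
Qed.

Fixpoint var_bound (t : term) : nat :=
  match t with
  | Var k => S k
  | Add u v | Mul u v => Nat.max (var_bound u) (var_bound v)
  end.

Lemma var_bound_spec t w y : In w (words t) -> In y w -> y < var_bound t.
Proof.
  revert w; induction t as [k | u IHu v IHv | u IHu v IHv]; simpl; intros w Hw Hy.
  - destruct Hw as [<- | []]; destruct Hy as [<- | []]; lia.
  - apply in_app_or in Hw as [Hw | Hw]; [specialize (IHu w Hw Hy) | specialize (IHv w Hw Hy)]; lia.
  - apply in_word_prod in Hw as [a [b [Ha [Hb ->]]]].
    apply in_app_or in Hy as [Hy | Hy]; [specialize (IHu a Ha Hy) | specialize (IHv b Hb Hy)]; lia.
Qed.

Definition first_word (t : term) : list nat := hd [] (words t).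
Definition first_letter (t : term) : nat := hd 0 (first_word t).
Definition long_term (t : term) : bool := 2 <=? length (first_word t).

Lemma first_word_in t : In (first_word t) (words t).
Proof.
  unfold first_word; destruct (words_exist t) as [m Hm].
  destruct (words t); [destruct Hm | left; reflexivity].
Qed.

Lemma satisfies_short_words_incl p q s :
  satisfies S4add S4mul (p, q) ->
  (forall m, In m (words (subst s p)) -> length m = 1) ->
  forall m, In m (words (subst s q)) -> In m (words (subst s p)).
Proof.
  intros Hpq Hshort m Hm; apply in_words_subst in Hm as [q0 [Hq0 Hm]].
  assert (Hsingle : forall w, In w (words p) -> exists y, w = [y]).
  { intros w Hw; destruct (subst_words_exist s w) as [m' Hm'].
    assert (length m' = 1) by (apply Hshort, in_words_subst; eauto).
    apply subst_words_length in Hm'; apply word_length_pos in Hw.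
    destruct w as [|y [|]]; simpl in *; try lia; eauto. }
  (* As 3·3 = 1, the word [q0] can stay below 3 under [e] only if it is a single letter. *)
  set (e y := if in_dec Nat.eq_dec y q0 then e3 else e2).
  assert (Hle : forall w, In w (words p) -> S4le (val4 e w) e3).
  { intros w Hw; destruct (Hsingle w Hw) as [y ->].
    rewrite val4_single; unfold e; destruct (in_dec Nat.eq_dec y q0); reflexivity. }
  destruct (satisfies_le3_transfer p q e Hpq Hle q0 Hq0) as [Hq0le Hq0e3].
  assert (Hmap : map e q0 = repeat e3 (length q0)).
  { rewrite <- map_const; apply map_ext_in; intros y Hy.
    unfold e; destruct (in_dec Nat.eq_dec y q0); tauto. }
  assert (Hlen : length q0 = 1).
  { unfold word_value in Hq0le; rewrite Hmap in Hq0le.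
    rewrite <- (count_occ_repeat_eq S4_eq_dec (length q0) (eq_refl e3)).
    apply prod4_le3_count; [apply Forall_forall; intros x Hx; apply repeat_spec in Hx|]; auto. }
  destruct q0 as [|y [|]]; simpl in Hlen; try lia.
  destruct Hq0e3 as [w [Hw Hw3]]; [unfold word_value; rewrite Hmap; reflexivity|].
  destruct (Hsingle w Hw) as [y' ->]; rewrite val4_single in Hw3; unfold e in Hw3.
  destruct (in_dec Nat.eq_dec y' [y]) as [[<- | []] | _]; [|discriminate].
  apply in_words_subst; eauto.
Qed.

Section EdgeWords.

Variables (n : nat) (p : term) (s : nat -> term).
Hypothesis Hp : forall m, In m (words (subst s p)) -> cycle_edge n m.

Lemma subst_word_edge w m : In w (words p) -> In m (subst_words s w) -> cycle_edge n m.
Proof. intros Hw Hm; apply Hp, in_words_subst; eauto. Qed.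

Lemma edge_source_word_cases w :
  In w (words p) -> (exists y, w = [y]) \/ (exists y z, w = [y; z]).
Proof.
  intros Hw; destruct (subst_words_exist s w) as [m Hm].
  pose proof (subst_words_length _ _ _ Hm) as Hlen.
  rewrite (cycle_edge_length _ _ (subst_word_edge w m Hw Hm)) in Hlen.
  apply word_length_pos in Hw; destruct w as [|y [|z [|]]]; simpl in *; try lia; eauto.
Qed.

Lemma single_word_long y : In [y] (words p) -> long_term (s y) = true.
Proof.
  intros Hy; unfold long_term.
  assert (Hm : In (first_word (s y)) (subst_words s [y]))
    by (apply in_subst_words_single, first_word_in).
  rewrite (cycle_edge_length _ _ (subst_word_edge _ _ Hy Hm)); reflexivity.
Qed.

Lemma pair_word_first_letters y z :
  In [y; z] (words p) ->
  first_word (s y) = [first_letter (s y)] /\ first_word (s z) = [first_letter (s z)] /\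
  cycle_adj n (first_letter (s y)) (first_letter (s z)).
Proof.
  intros Hyz.
  assert (Hm : In (first_word (s y) ++ first_word (s z)) (subst_words s [y; z]))
    by (apply in_subst_words_pair; eauto using first_word_in).
  pose proof (subst_word_edge _ _ Hyz Hm) as Hedge.
  pose proof (word_length_pos _ _ (first_word_in (s y))) as Ly.
  pose proof (word_length_pos _ _ (first_word_in (s z))) as Lz.
  pose proof (cycle_edge_length _ _ Hedge) as L; rewrite length_app in L.
  unfold first_letter; revert Hedge.
  destruct (first_word (s y)) as [|a [|]], (first_word (s z)) as [|b [|]];
    simpl in *; try lia; auto.
Qed.

Lemma pair_word_short y z :
  In [y; z] (words p) -> long_term (s y) = false /\ long_term (s z) = false.
Proof.
  intros Hyz; unfold long_term.
  destruct (pair_word_first_letters y z Hyz) as [-> [-> _]]; auto.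
Qed.

End EdgeWords.

Lemma pair_words_2colorable n p s :
  var_bound p < n -> (forall m, In m (words (subst s p)) -> cycle_edge n m) ->
  exists col : nat -> bool, forall y z, In [y; z] (words p) -> col y <> col z.
Proof.
  intros Hn Hp.
  destruct (exists_not_in_below n (map (fun y => first_letter (s y)) (seq 0 (var_bound p))))
    as [r [Hr Hfresh]]; [rewrite length_map, length_seq; exact Hn|].
  destruct (cycle_minus_vertex_2colorable n r Hr) as [c Hc].
  exists (fun y => c (first_letter (s y))); intros y z Hyz.
  destruct (pair_word_first_letters n p s Hp y z Hyz) as [_ [_ Hadj]].
  assert (Hvars : forall x, In x [y; z] -> first_letter (s x) <> r).
  { intros x Hx E; apply Hfresh; rewrite <- E.
    apply (in_map (fun y => first_letter (s y))), in_seq.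
    pose proof (var_bound_spec p _ x Hyz Hx); lia. }
  apply Hc; [exact Hadj | apply Hvars; simpl; auto | apply Hvars; simpl; auto].
Qed.

Section ColoredTransfer.

Variables (n : nat) (p q : term) (s : nat -> term) (col : nat -> bool).
Hypothesis Hpq : satisfies S4add S4mul (p, q).
Hypothesis Hp : forall m, In m (words (subst s p)) -> cycle_edge n m.
Hypothesis Hcol : forall y z, In [y; z] (words p) -> col y <> col z.

(* Under a probe the pair words of [p] have properly coloured letters, hence value
   3·4 = 4·3 = 3 or 2, so [p] and therefore [q] stay below 3; as 3·3 = 1, exactly one letter
   of the tested word [q0] of [q] gets 3. *)
Definition probe (q0 : list nat) (b : bool) (y : nat) : S4 :=
  if in_dec Nat.eq_dec y q0 then
    if long_term (s y) || Bool.eqb (col y) b then e3 else e4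
  else e2.

Lemma probe_in q0 b y :
  In y q0 -> probe q0 b y = if long_term (s y) || Bool.eqb (col y) b then e3 else e4.
Proof. unfold probe; destruct (in_dec Nat.eq_dec y q0); tauto. Qed.

Lemma probe_not_in q0 b y : ~ In y q0 -> probe q0 b y = e2.
Proof. unfold probe; destruct (in_dec Nat.eq_dec y q0); tauto. Qed.

Lemma probe_p_word_le3 q0 b w : In w (words p) -> S4le (val4 (probe q0 b) w) e3.
Proof.
  intros Hw; destruct (edge_source_word_cases n p s Hp w Hw) as [[y ->] | [y [z ->]]].
  - rewrite val4_single; unfold probe; rewrite (single_word_long n p s Hp y Hw).
    destruct (in_dec Nat.eq_dec y q0); reflexivity.
  - rewrite val4_pair; pose proof (Hcol y z Hw) as Hyz.
    destruct (pair_word_short n p s Hp y z Hw) as [Ly Lz]; unfold probe; rewrite Ly, Lz.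
    destruct (in_dec Nat.eq_dec y q0), (in_dec Nat.eq_dec z q0), (col y), (col z), b;
      simpl; reflexivity || congruence.
Qed.

Lemma probe_q_word_count q0 b :
  In q0 (words q) -> count_occ S4_eq_dec (map (probe q0 b) q0) e3 = 1.
Proof.
  intros Hq0; apply prod4_le3_count.
  - apply Forall_forall; intros x Hx; apply in_map_iff in Hx as [y [<- Hy]].
    rewrite probe_in by exact Hy; destruct (_ || _); auto.
  - exact (proj1 (satisfies_le3_transfer p q _ Hpq (probe_p_word_le3 q0 b) q0 Hq0)).
Qed.

Lemma q_word_shape q0 :
  In q0 (words q) ->
  (exists y, q0 = [y] /\ long_term (s y) = true) \/
  (exists y z, q0 = [y; z] /\ long_term (s y) = false /\ long_term (s z) = false /\
               col y <> col z).
Proof.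
  intros Hq0.
  pose proof (probe_q_word_count q0 true Hq0) as Ht.
  pose proof (probe_q_word_count q0 false Hq0) as Hf.
  (* Every letter of [q0] gets 3 under at least one of the two probes. *)
  assert (Hcover : forall w, incl w q0 ->
    length w <= count_occ S4_eq_dec (map (probe q0 true) w) e3
                + count_occ S4_eq_dec (map (probe q0 false) w) e3).
  { induction w as [|y w IH]; intros Hw; simpl; [lia|].
    rewrite !probe_in by (apply Hw; left; reflexivity).
    specialize (IH (proj2 (incl_cons_inv Hw))).
    destruct (long_term (s y)), (col y); simpl; lia. }
  pose proof (Hcover q0 (incl_refl q0)) as Hlen; rewrite Ht, Hf in Hlen.
  pose proof (word_length_pos _ _ Hq0) as Hpos.
  destruct q0 as [|y [|z [|]]]; simpl in Hlen, Hpos; try lia; simpl in Ht, Hf;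
    rewrite !probe_in in Ht, Hf by (simpl; auto).
  - left; exists y; split; [reflexivity|].
    destruct (long_term (s y)), (col y); simpl in *; congruence.
  - right; exists y, z; split; [reflexivity|].
    destruct (long_term (s y)), (long_term (s z)), (col y), (col z); simpl in *;
      try discriminate; repeat split; congruence.
Qed.

Lemma q_word_matches_p_word q0 :
  In q0 (words q) ->
  In q0 (words p) \/ exists y z, q0 = [y; z] /\ In [z; y] (words p).
Proof.
  intros Hq0.
  assert (Hval : val4 (probe q0 true) q0 = e3).
  { unfold word_value; rewrite prod4_34; [rewrite probe_q_word_count by exact Hq0; reflexivity|].
    apply Forall_forall; intros x Hx; apply in_map_iff in Hx as [y [<- Hy]].
    rewrite probe_in by exact Hy; destruct (_ || _); auto. }
  destruct (proj2 (satisfies_le3_transfer p q _ Hpq (probe_p_word_le3 q0 true) q0 Hq0) Hval)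
    as [w [Hw Hw3]].
  destruct (edge_source_word_cases n p s Hp w Hw) as [[y' ->] | [y1 [z1 ->]]].
  - rewrite val4_single in Hw3.
    destruct (in_dec Nat.eq_dec y' q0) as [Hy' | Hy'];
      [|rewrite probe_not_in in Hw3 by exact Hy'; discriminate].
    pose proof (single_word_long n p s Hp y' Hw) as Ly'.
    destruct (q_word_shape q0 Hq0) as [[y [-> _]] | [y [z [-> [Ly [Lz _]]]]]].
    + destruct Hy' as [<- | []]; left; exact Hw.
    + destruct Hy' as [<- | [<- | []]]; congruence.
  - rewrite val4_pair in Hw3.
    destruct (in_dec Nat.eq_dec y1 q0) as [Hy1 | Hy1];
      [|rewrite probe_not_in in Hw3 by exact Hy1; discriminate].
    destruct (in_dec Nat.eq_dec z1 q0) as [Hz1 | Hz1];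
      [|rewrite (probe_not_in _ _ z1) in Hw3 by exact Hz1;
        destruct (probe q0 true y1); discriminate].
    pose proof (Hcol y1 z1 Hw) as C1.
    destruct (pair_word_short n p s Hp y1 z1 Hw) as [Ly1 _].
    destruct (q_word_shape q0 Hq0) as [[y [-> Ly]] | [y [z [-> _]]]].
    + destruct Hy1 as [<- | []]; congruence.
    + destruct Hy1 as [<- | [<- | []]], Hz1 as [<- | [<- | []]]; try congruence.
      * left; exact Hw.
      * right; eauto.
Qed.

Lemma colored_transfer_cycle_edges m :
  In m (words (subst s q)) -> cycle_edge n m.
Proof.
  intros Hm; apply in_words_subst in Hm as [q0 [Hq0 Hm]].
  destruct (q_word_matches_p_word q0 Hq0) as [Hp0 | [y [z [-> Hzy]]]].
  - exact (subst_word_edge n p s Hp q0 m Hp0 Hm).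
  - apply in_subst_words_pair in Hm as [a [b [Ha [Hb ->]]]].
    apply cycle_edge_app_swap; [exact (word_length_pos _ _ Ha) | exact (word_length_pos _ _ Hb)|].
    apply (subst_word_edge n p s Hp [z; y]); [exact Hzy|].
    apply in_subst_words_pair; eauto.
Qed.

End ColoredTransfer.

Lemma S4_identity_preserves_cycle_ctx n p q s a b :
  var_bound p < n -> satisfies S4add S4mul (p, q) ->
  words_in_ctx (cycle_edge n) a b (subst s p) -> words_in_ctx (cycle_edge n) a b (subst s q).
Proof.
  intros Hn Hpq Hp.
  destruct (list_eq_dec Nat.eq_dec (a ++ b) []) as [Hab | Hab].
  - apply app_eq_nil in Hab as [-> ->].
    assert (Hp' : forall m, In m (words (subst s p)) -> cycle_edge n m).
    { intros m Hm; specialize (Hp m Hm); simpl in Hp; rewrite app_nil_r in Hp; exact Hp. }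
    destruct (pair_words_2colorable n p s Hn Hp') as [col Hcol].
    intros m Hm; simpl; rewrite app_nil_r.
    exact (colored_transfer_cycle_edges n p q s col Hpq Hp' Hcol m Hm).
  - (* A nonempty context leaves room for words of length 1 only. *)
    intros m Hm; apply Hp, (satisfies_short_words_incl p q s Hpq); [|exact Hm].
    intros m' Hm'; pose proof (cycle_edge_length _ _ (Hp m' Hm')) as L.
    pose proof (word_length_pos _ _ Hm').
    assert (1 <= length (a ++ b)) by (destruct (a ++ b); [congruence | simpl; lia]).
    rewrite !length_app in *; lia.
Qed.

Lemma S4_identity_ctx_equiv n u v s :
  var_bound u < n -> var_bound v < n -> satisfies S4add S4mul (u, v) ->
  ctx_equiv (cycle_edge n) (subst s u) (subst s v).
Proof.
  intros Hu Hv Huv a b; split; apply S4_identity_preserves_cycle_ctx; auto.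
  intros e; symmetry; apply Huv.
Qed.

Definition edge_term (n i : nat) : term := Mul (Var i) (Var (cyc_succ n i)).

Fixpoint edges_term (n k : nat) : term :=
  match k with
  | 0 => edge_term n 0
  | S k' => Add (edges_term n k') (edge_term n (S k'))
  end.

Definition cycle_term (n : nat) : term := edges_term n (n - 1).

Fixpoint path_term (k : nat) : term :=
  match k with
  | 0 => Var 0
  | S k' => Mul (path_term k') (Var (S k'))
  end.

Lemma words_edges_term n k :
  words (edges_term n k) = map (fun i => [i; cyc_succ n i]) (seq 0 (S k)).
Proof.
  induction k as [|k IH]; [reflexivity|].
  rewrite seq_S, map_app, <- IH; reflexivity.
Qed.

Lemma words_path_term k : words (path_term k) = [seq 0 (S k)].
Proof.
  induction k as [|k IH]; [reflexivity|].
  simpl path_term; rewrite seq_S; simpl; rewrite IH; reflexivity.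
Qed.

Lemma cycle_term_edges n :
  1 <= n -> forall m, In m (words (cycle_term n)) -> cycle_edge n m.
Proof.
  intros Hn m Hm; unfold cycle_term in Hm; rewrite words_edges_term in Hm.
  apply in_map_iff in Hm as [i [<- Hi]]; apply in_seq in Hi.
  simpl; unfold cycle_adj, cyc_succ; destruct (Nat.eqb_spec (S i) n); lia.
Qed.

Definition cycle_value (n : nat) (e : nat -> S4) : S4 :=
  sum4 (map (fun i => S4mul (e i) (e (cyc_succ n i))) (seq 0 n)).

(* With letters in {3, 4}, an edge is 1 if both ends are 3, 3 if they differ and 4 if both
   are 4; a cycle sum other than 1 therefore has all edges equal. *)
Lemma S4_necklace_34 n (e : nat -> S4) :
  Nat.Odd n -> (forall i, i < n -> e i = e3 \/ e i = e4) ->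
  cycle_value n e = e1 \/ cycle_value n e = prod4 (map e (seq 0 n)).
Proof.
  intros Hodd H34.
  assert (Hn : 0 < n) by (destruct Hodd; lia).
  assert (Hsucc : forall i, i < n -> cyc_succ n i < n)
    by (intros i Hi; unfold cyc_succ; destruct (Nat.eqb_spec (S i) n); lia).
  assert (Hedges : forall z, S4le (cycle_value n e) z -> forall i, i < n ->
                   S4le (S4mul (e i) (e (cyc_succ n i))) z).
  { intros z Hz i Hi; apply sum4_le in Hz; rewrite Forall_forall in Hz.
    apply Hz, (in_map (fun i => S4mul (e i) (e (cyc_succ n i)))), in_seq; lia. }
  unfold S4le in Hedges.
  destruct (cycle_value n e); [left; reflexivity | exfalso | exfalso | right].
  - pose proof (Hedges e2 eq_refl 0 Hn) as H0.
    destruct (H34 0 Hn) as [E | E], (H34 _ (Hsucc 0 Hn)) as [E' | E'];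
      rewrite E, E' in H0; discriminate.
  - apply (odd_cycle_not_2colorable n (fun i => if S4_eq_dec (e i) e3 then true else false) Hodd).
    intros i Hi; pose proof (Hedges e3 eq_refl i Hi) as Hi3.
    destruct (H34 i Hi) as [E | E], (H34 _ (Hsucc i Hi)) as [E' | E'];
      rewrite E, E' in *; simpl; discriminate.
  - rewrite prod4_e4; [reflexivity|].
    apply Forall_forall; intros x Hx; apply in_map_iff in Hx as [i [<- Hi]]; apply in_seq in Hi.
    pose proof (Hedges e4 eq_refl i ltac:(lia)) as Hi4.
    destruct (H34 i ltac:(lia)) as [E | E], (H34 _ (Hsucc i ltac:(lia))) as [E' | E'];
      rewrite E, E' in *; simpl; discriminate || reflexivity.
Qed.

Lemma S4_necklace n (e : nat -> S4) :
  Nat.Odd n ->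
  cycle_value n e = S4add (cycle_value n e) (prod4 (map e (seq 0 n))).
Proof.
  intros Hodd.
  assert (Hsucc : forall i, i < n -> cyc_succ n i < n)
    by (intros i Hi; unfold cyc_succ; destruct (Nat.eqb_spec (S i) n); lia).
  destruct (in_dec S4_eq_dec e2 (map e (seq 0 n))) as [H2 | H2].
  { rewrite prod4_zero by exact H2; destruct (cycle_value n e); reflexivity. }
  assert (Hne2 : forall i, i < n -> e i <> e2).
  { intros i Hi E; apply H2; rewrite <- E; apply in_map, in_seq; lia. }
  destruct (in_dec S4_eq_dec e1 (map e (seq 0 n))) as [H1 | H1].
  - (* 1 absorbs every letter but 2, so an edge leaving a 1 is 1. *)
    apply in_map_iff in H1 as [i [Hi1 Hi]]; apply in_seq in Hi.
    assert (Hc : cycle_value n e = e1).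
    { apply sum4_one, in_map_iff; exists i; split; [|apply in_seq; lia].
      rewrite Hi1; pose proof (Hne2 _ (Hsucc i ltac:(lia))).
      destruct (e (cyc_succ n i)); simpl; congruence. }
    rewrite Hc; reflexivity.
  - assert (H34 : forall i, i < n -> e i = e3 \/ e i = e4).
    { intros i Hi; pose proof (Hne2 i Hi).
      assert (e i <> e1) by (intros E; apply H1; rewrite <- E; apply in_map, in_seq; lia).
      destruct (e i); auto; congruence. }
    destruct (S4_necklace_34 n e Hodd H34) as [-> | <-]; [|destruct (cycle_value n e)];
      reflexivity.
Qed.

Lemma S4_cycle_identity n :
  Nat.Odd n -> satisfies S4add S4mul (cycle_term n, Add (cycle_term n) (path_term (n - 1))).
Proof.
  intros Hodd e; simpl.
  unfold cycle_term; rewrite !S4_eval_words, words_edges_term, words_path_term.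
  replace (S (n - 1)) with n by (destruct Hodd; lia).
  rewrite map_map, (map_ext _ (fun i => S4mul (e i) (e (cyc_succ n i))))
    by (intros i; apply val4_pair).
  simpl; unfold word_value; fold (cycle_value n e).
  rewrite (S4_necklace n e Hodd) at 1.
  destruct (cycle_value n e), (prod4 (map e (seq 0 n))); reflexivity.
Qed.

Lemma var_bound_list (Sigma : list identity) :
  exists B, forall u v, In (u, v) Sigma -> var_bound u <= B /\ var_bound v <= B.
Proof.
  induction Sigma as [|[u v] Sigma [B HB]]; [exists 0; intros u v []|].
  exists (Nat.max B (Nat.max (var_bound u) (var_bound v))).
  intros u' v' [E | H]; [injection E as -> ->; lia | destruct (HB _ _ H); lia].
Qed.

Theorem proposition2p1 : ~ finitely_based S4add S4mul.
Proof.
  intros [Sigma [Hsound Hcomplete]].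
  destruct (var_bound_list Sigma) as [B HB].
  set (n := 2 * B + 3).
  assert (Hodd : Nat.Odd n) by (exists (B + 1); unfold n; lia).
  assert (Hinv : forall u v, derives Sigma u v -> ctx_equiv (cycle_edge n) u v).
  { intros u v D; rewrite <- (subst_Var u), <- (subst_Var v).
    apply (derives_ctx_equiv _ Sigma); [intros u' v' Huv s | exact D].
    destruct (HB _ _ Huv); apply S4_identity_ctx_equiv; try (unfold n; lia).
    exact (Hsound _ Huv). }
  set (C := cycle_term n); set (L := path_term (n - 1)).
  assert (D : derives Sigma C (Add C L)) by (apply Hcomplete, S4_cycle_identity, Hodd).
  assert (HCL : words_in_ctx (cycle_edge n) [] [] (Add C L)).
  { apply (Hinv _ _ D); intros m Hm; rewrite app_nil_r.
    apply cycle_term_edges; [unfold n; lia | exact Hm]. }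
  assert (HL : In (seq 0 n) (words (Add C L))).
  { simpl; apply in_or_app; right; unfold L; rewrite words_path_term.
    replace (S (n - 1)) with n by (unfold n; lia); left; reflexivity. }
  apply HCL, cycle_edge_length in HL; simpl in HL; rewrite app_nil_r, length_seq in HL.
  unfold n in HL; lia.
Qed.
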